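(* Let $X$ be a complex Banach space, $J:X\to X^*$ a duality section, and $x\in X$ a unit vector such that for every unit vector $y\neq x$ one has $\|x+y\|<2$. If $T=\{e^{tA}:t\ge 0\}$ is a $(C_0)$ contraction semigroup with generator $A$ and $\lim_{t\to\infty}|\langle T(t)x,J(x)\rangle|=1$, then $x$ is in the domain of $A$ and $Ax=i\lambda x$ for some real $\lambda$.
   Context: For a complex Banach space $X$, a functional $x^*\in X^*$ is called dual to $x\in X$ if $\langle x,x^*\rangle = \|x^*\|\|x\| = \|x^*\|^2=\|x\|^2$. A map $J:X\to X^*$ is a duality section if $J(x)$ is dual to $x$ for every $x\in X$. *)

From mathcomp Require Import all_boot all_order all_algebra.
From mathcomp Require Import all_classical all_reals all_analysis.
From mathcomp Require Export complex.
Import Order.TTheory GRing.Theory Num.Theory numFieldNormedType.Exports.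
Local Open Scope classical_set_scope.
Local Open Scope ring_scope.
Local Open Scope complex_scope.

Section Defs.
Context {R : realType} {X : normedModType R[i]}.

Definition rnorm (x : X) : R := complex.Re `|x|.

Definition is_dual_elt (f : X -> R[i]) : Prop :=
  (forall (a : R[i]) (u v : X), f (a *: u + v) = a * f u + f v) /\
  continuous (f : X -> R[i]^o).

Definition dual_norm (f : X -> R[i]) : R :=
  sup [set complex.Re `|f y| | y in [set y : X | rnorm y <= 1]].

Definition dual_to (x : X) (f : X -> R[i]) : Prop :=
  f x = (dual_norm f * rnorm x)%:C /\
  dual_norm f * rnorm x = dual_norm f ^+ 2 /\
  dual_norm f ^+ 2 = rnorm x ^+ 2.

Definition duality_section (J : X -> X -> R[i]) : Prop :=
  forall x, is_dual_elt (J x) /\ dual_to x (J x).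

(* (C_0) contraction semigroup {T(t) : t >= 0} of bounded C-linear operators;
   T is indexed by R, only t >= 0 matters. *)
Definition C0_contraction_semigroup (T : R -> X -> X) : Prop :=
  (forall t, 0 <= t -> forall (a : R[i]) (u v : X), T t (a *: u + v) = a *: T t u + T t v) /\
  (forall t, 0 <= t -> continuous (T t)) /\
  (forall u, T 0 u = u) /\
  (forall s t, 0 <= s -> 0 <= t -> forall u, T (s + t) u = T s (T t u)) /\
  (forall t, 0 <= t -> forall u, rnorm (T t u) <= rnorm u) /\
  (forall u, (fun t => T t u) @ 0^'+ --> u).

Definition diff_quot (T : R -> X -> X) (u : X) (h : R) : X :=
  (h^-1)%:C *: (T h u - u).

Definition is_generator (T : R -> X -> X) (D : set X) (A : X -> X) : Prop :=
  D = [set u | cvg (diff_quot T u @ 0^'+)] /\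
  (forall u, D u -> diff_quot T u @ 0^'+ --> A u).

End Defs.

From mathcomp Require Import all_boot all_order all_algebra.
From mathcomp Require Import all_classical all_reals all_analysis.
From mathcomp Require Import complex.
From mathcomp Require Import ring lra.
Import Order.TTheory GRing.Theory Num.Theory numFieldNormedType.Exports.
Local Open Scope classical_set_scope.
Local Open Scope ring_scope.
Local Open Scope complex_scope.

(* Let f := J x, a functional of norm one with f x = 1.  For s >= 0 the vector
   w := T(s)x has norm one, since |f(T(t+s)x)| <= |w| tends to 1.  Let a0
   maximise |x + a w| over the unit circle.  If a0 w <> x, rotundity at x gives
   M := |x + a0 w| < 2; but for t large both |f(T(t)x)| and |f(T(t)w)| exceed
   M/2, and aligning their phases by some unimodular a gives
   |f(T(t)(x + a w))| > M.  Hence T(s)x = c(s) x where c(s) := f(T(s)x) is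
   unimodular, multiplicative and right continuous at 0.  Near 0,
   c(s) = exp(i phi(s)) with phi := asin (Im c) additive and small, hence
   linear: c(s) = exp(i lambda s), so A x = i lambda x. *)

Section ComplexPreliminaries.
Context {R : realType}.
Local Notation K := R[i].
Local Notation Ko := (R[i])^o.

Lemma ge0_RRe (z : K) : 0 <= z -> (complex.Re z)%:C = z.
Proof. by move=> /ger0_real; exact: RRe_real. Qed.

Lemma normr_RRe (z : K) : (complex.Re `|z|)%:C = `|z|.
Proof. exact/ge0_RRe. Qed.

Lemma normr_realC (r : R) : `|r%:C| = `|r|%:C :> K.
Proof. by rewrite normc_def /= expr0n addr0 sqrtr_sqr. Qed.

Lemma normr_Im_le (z : K) : `|complex.Im z|%:C <= `|z|.
Proof.
have := normc_ge_Re (z * 'i); rewrite ReiNIm normrN normrM.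
by rewrite (_ : `|'i| = 1 :> K) ?mulr1 // normc_def /= expr0n expr1n add0r sqrtr1.
Qed.

Section Limits.
Context {T : Type} {F : set_system T} {FF : Filter F}.

Lemma cvg_realC {g : T -> R} {l : R} :
  g @ F --> l -> (fun t => (g t)%:C : Ko) @ F --> (l%:C : Ko).
Proof.
move=> /cvgrPdist_lt Hg; apply/cvgrPdist_lt => e e0.
have eE := ge0_RRe _ (ltW e0); rewrite -eE; rewrite -eE ltcR in e0.
by apply: filterS (Hg _ e0) => t Ht; rewrite -rmorphB normr_realC ltcR.
Qed.

Lemma cvg_dominated_additive (p : K -> R) (g : T -> Ko) (l : Ko) :
  (forall z, `|p z|%:C <= `|z|) -> {morph p : u v / u - v} ->
  g @ F --> l -> (fun t => p (g t)) @ F --> p l.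
Proof.
move=> pz pB /cvgrPdist_lt Hg; apply/cvgrPdist_lt => e e0.
have e0' : 0 < e%:C :> K by rewrite ltcR.
apply: filterS (Hg _ e0') => t; rewrite -ltcR -pB; exact: le_lt_trans.
Qed.

Lemma cvg_Re {g : T -> Ko} {l : Ko} :
  g @ F --> l -> (fun t => complex.Re (g t)) @ F --> complex.Re l.
Proof. by apply: cvg_dominated_additive; [exact: normc_ge_Re | exact: raddfB]. Qed.

Lemma cvg_Im {g : T -> Ko} {l : Ko} :
  g @ F --> l -> (fun t => complex.Im (g t)) @ F --> complex.Im l.
Proof. by apply: cvg_dominated_additive; [exact: normr_Im_le | exact: raddfB]. Qed.

End Limits.

Lemma unit_ReIm (a : K) : `|a| = 1 -> complex.Re a ^+ 2 + complex.Im a ^+ 2 = 1.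
Proof. by move=> a1; apply: complexI; rewrite add_Re2_Im2 a1 expr1n. Qed.

End ComplexPreliminaries.

Section UnitCircle.
Context {R : realType}.
Local Notation K := R[i].
Local Notation Ko := (R[i])^o.

(* The upper ([s = 1]) and lower ([s = -1]) half of the unit circle,
   parametrised by the real part on [-1, 1]. *)
Definition semicircle (s r : R) : K := r%:C + 'i * (s * Num.sqrt (1 - r ^+ 2))%:C.

Lemma semicircle_continuous s : continuous (semicircle s : R -> Ko).
Proof.
move=> r; apply: cvgD; first by apply: cvg_realC; exact: cvg_id.
apply: cvgM; first exact: cvg_cst.
apply: cvg_realC; apply: cvgM; first exact: cvg_cst.
apply: (@continuous_comp _ _ _ (fun t : R => 1 - t ^+ 2)); last exact: sqrt_continuous.
by apply: cvgB; [exact: cvg_cst | exact: exprn_continuous].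
Qed.

Lemma normr_semicircle s r : s ^+ 2 = 1 -> -1 <= r <= 1 -> `|semicircle s r| = 1.
Proof.
move=> s2 /andP[r1 r2]; have h : 0 <= 1 - r ^+ 2 by nra.
rewrite normc_def /= !mul0r !mul1r !subr0 !add0r addr0 exprMn s2 mul1r sqr_sqrtr //.
by rewrite subrKC sqrtr1.
Qed.

Lemma unit_semicircle (a : K) : `|a| = 1 ->
  -1 <= complex.Re a <= 1 /\
  a = semicircle (if 0 <= complex.Im a then 1 else -1) (complex.Re a).
Proof.
move=> /unit_ReIm h; split; first by apply/andP; split; nra.
rewrite /semicircle [LHS]complexE; congr (_ + _ * _%:C).
have -> : 1 - complex.Re a ^+ 2 = complex.Im a ^+ 2 by lra.
rewrite sqrtr_sqr; case: ifP => H; first by rewrite mul1r ger0_norm.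
by rewrite ltr0_norm ?mulN1r ?opprK // ltNge H.
Qed.

Lemma unit_circle_max (h : Ko -> R) : continuous h ->
  exists a0 : K, `|a0| = 1 /\ forall a, `|a| = 1 -> h a <= h a0.
Proof.
move=> hc.
have half_max s : exists2 c, c \in `[-1, 1] &
    forall t, t \in `[-1, 1] -> h (semicircle s t) <= h (semicircle s c).
  apply: EVT_max; first by lra.
  by apply: continuous_subspaceT => r; exact: continuous_comp (semicircle_continuous s r) (hc _).
have [c1 c1i H1] := half_max 1; have [c2 c2i H2] := half_max (-1).
have n1 : `|semicircle 1 c1| = 1 by apply: normr_semicircle; rewrite ?expr1n // -in_itv.
have n2 : `|semicircle (-1) c2| = 1.
  by apply: normr_semicircle; rewrite ?sqrrN ?expr1n // -in_itv.
have le_max a : `|a| = 1 -> h a <= Num.max (h (semicircle 1 c1)) (h (semicircle (-1) c2)).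
  move=> /unit_semicircle [ai ->]; case: ifP => _; rewrite le_max.
    by rewrite H1 // in_itv.
  by rewrite H2 ?orbT // in_itv.
case: (leP (h (semicircle 1 c1)) (h (semicircle (-1) c2))) => Hc.
  by exists (semicircle (-1) c2); split => // a /le_max; rewrite max_r.
by exists (semicircle 1 c1); split => // a /le_max; rewrite max_l // ltW.
Qed.

Lemma phase_align (p q : K) : p != 0 -> q != 0 ->
  exists2 a : K, `|a| = 1 & `|p + a * q| = `|p| + `|q|.
Proof.
move=> p0 q0; have np0 : `|p| != 0 by rewrite normr_eq0.
exists (p * `|q| / (q * `|p|)).
  rewrite normf_div !normrM !normr_id [X in _ / X]mulrC divff //.
  by rewrite mulf_neq0 // normr_eq0.
have -> : p + p * `|q| / (q * `|p|) * q = `|p|^-1 * (`|p| + `|q|) * p.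
  by field; rewrite q0 np0.
rewrite !normrM normfV normr_id (ger0_norm (addr_ge0 (normr_ge0 _) (normr_ge0 _))).
by rewrite mulrC mulrA mulfV // mul1r.
Qed.

End UnitCircle.

Section LinearAxiom.
Context {K : pzRingType} {U V : lmodType K} (f : U -> V).
Hypothesis flin : forall (a : K) (u v : U), f (a *: u + v) = a *: f u + f v.

Lemma lin_axiom0 : f 0 = 0.
Proof.
have := flin 1 0 0; rewrite !scale1r addr0 => f00.
by apply: (addrI (f 0)); rewrite addr0 -f00.
Qed.

Lemma lin_axiomZ a u : f (a *: u) = a *: f u.
Proof. by rewrite -[a *: u]addr0 flin lin_axiom0 addr0. Qed.

End LinearAxiom.

Section Duality.
Context {R : realType} {X : normedModType R[i]}.
Local Notation K := R[i].

Lemma rnormE (y : X) : `|y| = (rnorm y)%:C.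
Proof. exact/esym/ge0_RRe. Qed.

Lemma rnorm_ge0 (y : X) : 0 <= rnorm y.
Proof. by rewrite -ler0c -rnormE. Qed.

Lemma cvg_rnorm {T} {F : set_system T} {FF : Filter F} {g : T -> X} {l : X} :
  g @ F --> l -> (fun t => rnorm (g t)) @ F --> rnorm l.
Proof.
move=> /cvgrPdist_lt Hg; apply/cvgrPdist_lt => e e0.
have e0' : 0 < e%:C :> K by rewrite ltcR.
apply: filterS (Hg _ e0') => t Ht; rewrite -ltcR -normr_realC.
rewrite (_ : (rnorm l - rnorm (g t))%:C = `|l| - `|g t|); last by rewrite !rnormE rmorphB.
exact: le_lt_trans (ler_dist_dist _ _) Ht.
Qed.

(* [sup] of a set without supremum is [0], so a positive [dual_norm] is a genuine bound. *)
Lemma dual_norm_bound (f : X -> K) :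
  (forall (a : K) (u v : X), f (a *: u + v) = a * f u + f v) -> 0 < dual_norm f ->
  forall y, `|f y| <= (dual_norm f)%:C * `|y|.
Proof.
move=> flin d0 y; set E := [set complex.Re `|f y| | y in [set y : X | rnorm y <= 1]].
have supE : has_sup E.
  by apply: contrapT => /sup_out supE; move: d0; rewrite /dual_norm -/E supE ltxx.
have [->|y0] := eqVneq y 0.
  by rewrite (lin_axiom0 (f : X -> K^o)) // !normr0 mulr0.
have r0 : 0 < rnorm y by rewrite -ltcR -rnormE normr_gt0.
have ry : y = (rnorm y)%:C *: ((rnorm y)^-1%:C *: y).
  by rewrite scalerA -rmorphM divff ?gt_eqF // scale1r.
rewrite {1}ry (lin_axiomZ (f : X -> K^o)) // normrM rnormE ger0_norm ?ler0c; last exact: ltW.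
rewrite mulrC ler_pM2r ?ltcR // -normr_RRe lecR.
apply: sup_upper_bound => //; exists ((rnorm y)^-1%:C *: y) => //=.
rewrite /rnorm normrZ ger0_norm; last by rewrite ler0c invr_ge0 ltW.
by rewrite rnormE -rmorphM mulVf ?gt_eqF.
Qed.

Lemma duality_unit (J : X -> X -> K) (x : X) : duality_section J -> rnorm x = 1 ->
  J x x = 1 /\ forall y, `|J x y| <= `|y|.
Proof.
move=> HJ x1; have [[flin _] [fx [d1 d2]]] := HJ x.
rewrite x1 mulr1 expr1n in fx d1 d2.
have d_1 : dual_norm (J x) = 1 by rewrite d1 d2.
split; first by rewrite fx d_1.
have d0 : 0 < dual_norm (J x) by rewrite d_1.
by move=> y; have := dual_norm_bound _ flin d0 y; rewrite d_1 rmorph1 mul1r.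
Qed.

End Duality.

Section Orbit.
Context {R : realType} {X : normedModType R[i]}.
Local Notation K := R[i].
Local Notation Ko := (R[i])^o.
Variables (f : X -> K) (T : R -> X -> X) (x : X).
Hypothesis flin : forall (a : K) (u v : X), f (a *: u + v) = a * f u + f v.
Hypothesis f_le : forall y, `|f y| <= `|y|.
Hypothesis fx : f x = 1.
Hypothesis x1 : rnorm x = 1.
Hypothesis x_rotund : forall y : X, rnorm y = 1 -> y <> x -> rnorm (x + y) < 2.
Hypothesis Tlin :
  forall t, 0 <= t -> forall (a : K) (u v : X), T t (a *: u + v) = a *: T t u + T t v.
Hypothesis Tmul : forall s t, 0 <= s -> 0 <= t -> forall u, T (s + t) u = T s (T t u).
Hypothesis Tcontr : forall t, 0 <= t -> forall u, rnorm (T t u) <= rnorm u.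
Hypothesis f_orbit : (fun t => complex.Re `|f (T t x)|) @ +oo --> (1 : R).

Lemma orbit_f_le s t : 0 <= s -> 0 <= t ->
  complex.Re `|f (T (t + s) x)| <= rnorm (T s x).
Proof.
move=> s0 t0; rewrite -lecR normr_RRe -rnormE Tmul //.
by apply: le_trans (f_le _) _; rewrite !rnormE lecR Tcontr.
Qed.

Lemma orbit_rnorm s : 0 <= s -> rnorm (T s x) = 1.
Proof.
move=> s0; apply/eqP; rewrite eq_le -{1}x1 Tcontr //= leNgt; apply/negP => w_lt1.
have [N [_ HN]] := cvgr_gt _ f_orbit _ w_lt1.
pose t := Num.max N s + 1.
have tN : N < t by rewrite ltr_pwDr // le_max lexx.
have ts : s <= t by rewrite ler_wpDr // le_max lexx orbT.
have := @orbit_f_le s (t - s) s0 ltac:(by rewrite subr_ge0); rewrite subrK.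
by have := HN t tN; lra.
Qed.

Lemma orbit_phase s : 0 <= s -> exists2 a : K, `|a| = 1 & a *: T s x = x.
Proof.
move=> s0; set w := T s x.
have w1 : `|w| = 1 by rewrite rnormE orbit_rnorm.
have cont : continuous (fun a : Ko => rnorm (x + a *: w)).
  move=> a; apply: (@cvg_rnorm _ _ _ (nbhs (a : Ko)) _ (fun b : Ko => x + b *: w)).
  by apply: cvgD; [exact: cvg_cst | exact: (@cvgZr_tmp _ X Ko (nbhs (a : Ko)) _ id a w cvg_id)].
have [a0 [a01 a0_max]] := unit_circle_max _ cont.
exists a0 => //; apply: contrapT => a0w.
pose M := rnorm (x + a0 *: w).
have M2 : M < 2.
  apply: x_rotund => //.
  by apply: complexI; rewrite -rnormE normrZ a01 w1 mul1r.
have M0 : 0 <= M := rnorm_ge0 _.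
have [N [_ HN]] := cvgr_gt _ f_orbit (M / 2) ltac:(lra).
pose t := Num.max N 0 + 1.
have tN : N < t by rewrite ltr_pwDr // le_max lexx.
have t0 : 0 <= t by rewrite addr_ge0 // le_max lexx orbT.
set p := f (T t x); set q := f (T t w).
have pE : `|p| = (complex.Re `|f (T t x)|)%:C by rewrite normr_RRe.
have qE : `|q| = (complex.Re `|f (T (t + s) x)|)%:C by rewrite normr_RRe Tmul.
have p_gt : M / 2 < complex.Re `|f (T t x)| := HN t tN.
have q_gt : M / 2 < complex.Re `|f (T (t + s) x)| by apply: HN; rewrite ltr_wpDr.
have p0 : p != 0 by rewrite -normr_eq0 pE; apply/eqP => /complexI; lra.
have q0 : q != 0 by rewrite -normr_eq0 qE; apply/eqP => /complexI; lra.
have [a a1 pq] := phase_align _ _ p0 q0.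
have : `|p + a * q| <= M%:C.
  rewrite /p /q addrC -flin -Tlin // [a *: w + x]addrC.
  apply: le_trans (f_le _) _; rewrite rnormE lecR.
  by apply: le_trans (Tcontr _ t0 _) _; apply: a0_max.
by rewrite pq pE qE -rmorphD lecR; lra.
Qed.

Lemma orbit_eigen s : 0 <= s -> T s x = f (T s x) *: x /\ `|f (T s x)| = 1.
Proof.
move=> s0; have [a a1 ax] := orbit_phase _ s0.
have a0 : a != 0 by rewrite -normr_gt0 a1.
have -> : T s x = a^-1 *: x by rewrite -{2}ax scalerA mulVf // scale1r.
rewrite (lin_axiomZ (f : X -> Ko)) // fx /GRing.scale /= mulr1.
by rewrite normfV a1 invr1.
Qed.

End Orbit.

Lemma near_at_right0 {R : realType} (P : R -> Prop) : (\forall h \near 0^'+, P h) ->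
  exists2 e, 0 < e & forall h, 0 < h -> h < e -> P h.
Proof.
move=> [e e0 He]; exists e => // h h0 he; apply: He => //.
by rewrite /ball /= sub0r normrN gtr0_norm.
Qed.

Section AdditiveInterval.
Context {R : realType}.
Variables (g : R -> R) (delta : R).
Hypothesis delta0 : 0 < delta.
Hypothesis gD : forall s t, 0 <= s -> 0 <= t -> s + t <= delta -> g (s + t) = g s + g t.

Lemma additive0 : g 0 = 0.
Proof.
have := @gD 0 0 (lexx 0) (lexx 0); rewrite addr0 => /(_ (ltW delta0)) g00.
by apply: (addrI (g 0)); rewrite addr0 -g00.
Qed.

Lemma additive_natmul n a : 0 <= a -> n%:R * a <= delta -> g (n%:R * a) = n%:R * g a.
Proof.
move=> a0; elim: n => [|n IHn] na; first by rewrite !mul0r additive0.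
have na_ge0 : 0 <= n%:R * a by rewrite mulr_ge0.
have na_le : n%:R * a <= delta.
  by apply: le_trans na; rewrite ler_wpM2r // ler_nat.
have na' : n%:R * a + a <= delta by rewrite -[a in _ + a]mul1r -mulrDl natr1.
by rewrite -natr1 !mulrDl !mul1r gD // IHn.
Qed.

Hypothesis g_cvg0 : g @ 0^'+ --> 0.

(* Cut [0, delta] into [n] steps [a] shorter than the continuity radius: [g a = g delta / n]
   vanishes, and [g h] equals [g] of the remainder of [h] modulo [a]. *)
Lemma additive_vanish : g delta = 0 -> forall h, 0 <= h <= delta -> g h = 0.
Proof.
move=> g_delta h /andP[h0 hd]; apply/eqP; rewrite -normr_le0.
apply/ler_addgt0Pr => e e0; rewrite add0r.
have [eta eta0 g_small] := near_at_right0 _ (cvgr_dist_lt _ _ g_cvg0 _ e0).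
pose n := (Num.truncn (delta / eta)).+1.
have n0 : 0 < n%:R :> R by rewrite ltr0n.
pose a := delta / n%:R.
have a0 : 0 < a by rewrite divr_gt0.
have na : n%:R * a = delta by rewrite /a mulrC divfK // gt_eqF.
have a_eta : a < eta.
  by rewrite /a ltr_pdivrMr // mulrC -ltr_pdivrMr // truncnS_gt.
have ga : g a = 0.
  by apply: (mulfI (lt0r_neq0 n0)); rewrite mulr0 -additive_natmul ?na // (ltW a0).
pose k := Num.truncn (h / a).
have /andP[kh hk] := truncn_itv (divr_ge0 h0 (ltW a0)).
rewrite -/k in kh hk.
have ka_ge0 : 0 <= k%:R * a by rewrite mulr_ge0 // ltW.
have ka_le : k%:R * a <= h by rewrite -ler_pdivlMr.
pose r := h - k%:R * a.
have r0 : 0 <= r by rewrite subr_ge0.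
have ra : r < a by rewrite ltrBlDl -[a in _ + a]mul1r -mulrDl natr1 -ltr_pdivrMr.
have kar : k%:R * a + r = h by rewrite /r addrC subrK.
rewrite -kar gD ?kar // additive_natmul ?(le_trans ka_le hd) ?(ltW a0) // ga mulr0 add0r.
have [->|r_neq0] := eqVneq r 0; first by rewrite additive0 normr0 ltW.
apply: ltW; rewrite -normrN -sub0r; apply: g_small.
  by rewrite lt_neqAle eq_sym r_neq0.
exact: lt_trans ra a_eta.
Qed.

End AdditiveInterval.

Lemma additive_linear {R : realType} (g : R -> R) (delta : R) : 0 < delta ->
  (forall s t, 0 <= s -> 0 <= t -> s + t <= delta -> g (s + t) = g s + g t) ->
  g @ 0^'+ --> 0 ->
  forall h, 0 <= h <= delta -> g h = h / delta * g delta.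
Proof.
move=> delta0 gD g_cvg0 h hd; apply/eqP; rewrite -subr_eq0; apply/eqP.
pose g' t := g t - t / delta * g delta.
have g'D s t : 0 <= s -> 0 <= t -> s + t <= delta -> g' (s + t) = g' s + g' t.
  by move=> s0 t0 std; rewrite /g' gD // !mulrDl opprD addrACA.
have g'_cvg0 : g' @ 0^'+ --> 0.
  rewrite [X in _ --> X](_ : 0 = 0 - 0 / delta * g delta); last by rewrite !mul0r subr0.
  rewrite /g'; apply: cvgB => //.
  by apply: cvgMr_tmp; apply: cvgMr_tmp; exact: cvg_at_right_filter cvg_id.
have g'_delta : g' delta = 0 by rewrite /g' divff ?gt_eqF // mul1r subrr.
exact: (additive_vanish g' delta delta0 g'D g'_cvg0 g'_delta h hd).
Qed.

Lemma is_derive0_dilate_right {R : realType} (g : R -> R) (dg lam : R) :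
  is_derive (0 : R) 1 g dg -> (fun h => (g (lam * h) - g 0) / h) @ 0^'+ --> lam * dg.
Proof.
move=> g'0; have dif : differentiable g 0 by apply/derivable1_diffP; exact: ex_derive.
have Dlam : 'D_lam g 0 = lam * dg.
  rewrite deriveE // (_ : 'd g 0 lam = lam *: 'd g 0 1); last first.
    by rewrite -linearZ /= [lam *: 1]mulr1.
  by rewrite -deriveE // derive_val.
apply: cvg_dnbhs_at_right; rewrite -Dlam.
have -> : (fun h => (g (lam * h) - g 0) / h) =
          (fun h => h^-1 *: ((g \o shift 0) (h *: lam) - g 0)).
  by apply: funext => h /=; rewrite addr0 mulrC [h *: lam]mulrC.
exact: diff_derivable dif.
Qed.

Lemma asin0 {R : realType} : asin 0 = 0 :> R.
Proof.
have pi0 := @pi_gt0 R.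
by rewrite -{1}sin0 sinK // in_itv /=; apply/andP; split; lra.
Qed.

Section UnitarySemigroup.
Context {R : realType}.
Local Notation K := R[i].
Local Notation Ko := (R[i])^o.
Variable c : R -> K.
Hypothesis c0 : c 0 = 1.
Hypothesis c_unit : forall s, 0 <= s -> `|c s| = 1.
Hypothesis cD : forall s t, 0 <= s -> 0 <= t -> c (s + t) = c s * c t.
Hypothesis c_cvg : (c : R -> Ko) @ 0^'+ --> (1 : Ko).

(* The argument of [c s], valid while [c s] stays in the right half-plane. *)
Let phi s := asin (complex.Im (c s)).

Let phi_cvg0 : phi @ 0^'+ --> (0 : R).
Proof.
have asin_cont : {for (0 : R), continuous (@asin R)}.
  by apply: continuous_asin; apply/andP; split; lra.
by have := continuous_cvg _ asin_cont (cvg_Im c_cvg); rewrite /= asin0; apply.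
Qed.

Lemma unitary_polar : exists2 delta : R, 0 < delta & forall h, 0 <= h <= delta ->
  - (pi / 4) <= phi h <= pi / 4 /\ c h = (cos (phi h))%:C + 'i * (sin (phi h))%:C.
Proof.
have pi0 := @pi_gt0 R.
have [e1 e10 lt1] := near_at_right0 _ (cvgr_lt _ phi_cvg0 (pi / 4) ltac:(lra)).
have [e2 e20 gt2] := near_at_right0 _ (cvgr_gt _ phi_cvg0 (- (pi / 4)) ltac:(lra)).
have [e3 e30 gt3] := near_at_right0 _ (cvgr_gt _ (cvg_Re c_cvg) 0 ltr01).
pose e := Num.min e1 (Num.min e2 e3).
have e0 : 0 < e by rewrite !lt_min e10 e20 e30.
have [e_e1 e_e2 e_e3] : [/\ e <= e1, e <= e2 & e <= e3] by rewrite !ge_min !lexx /= !orbT.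
exists (e / 2) => [|h /andP[h0 he]]; first by rewrite divr_gt0.
have ReIm := unit_ReIm _ (c_unit _ h0).
have [phi_h Re_h] : - (pi / 4) <= phi h <= pi / 4 /\ 0 < complex.Re (c h).
  have [->|h_neq0] := eqVneq h 0.
    by rewrite /phi c0 /= asin0; split; [apply/andP; split|]; lra.
  have h_gt0 : 0 < h by rewrite lt_neqAle eq_sym h_neq0.
  have := lt1 h h_gt0; have := gt2 h h_gt0; have := gt3 h h_gt0.
  by move=> /(_ ltac:(lra)) ? /(_ ltac:(lra)) ? /(_ ltac:(lra)) ?; split; [apply/andP; split|]; lra.
have Im_h : -1 <= complex.Im (c h) <= 1 by apply/andP; split; nra.
split => //; rewrite [LHS]complexE; congr (_%:C + _ * _%:C); last by rewrite /phi asinK.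
rewrite /phi cos_asin // (_ : 1 - _ = complex.Re (c h) ^+ 2); last by lra.
by rewrite sqrtr_sqr ger0_norm // ltW.
Qed.

Lemma unitary_right_deriv :
  exists lam : R, (fun h : R => ((h^-1)%:C * (c h - 1) : Ko)) @ 0^'+ --> ('i * lam%:C : Ko).
Proof.
have pi0 := @pi_gt0 R.
have [delta delta0 polar] := unitary_polar.
have phiD s t : 0 <= s -> 0 <= t -> s + t <= delta -> phi (s + t) = phi s + phi t.
  move=> s0 t0 std.
  have [/andP[? ?] cs] := polar s ltac:(apply/andP; split; lra).
  have [/andP[? ?] ct] := polar t ltac:(apply/andP; split; lra).
  have Im_st : complex.Im (c (s + t)) = sin (phi s + phi t).
    by rewrite cD // cs ct sinD /=; ring.
  by rewrite {1}/phi Im_st sinK // in_itv /=; apply/andP; split; lra.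
exists (phi delta / delta).
have phi_lin := @additive_linear _ phi delta delta0 phiD phi_cvg0.
pose G h := ((cos (phi delta / delta * h) - cos 0) / h)%:C +
            'i * ((sin (phi delta / delta * h) - sin 0) / h)%:C : Ko.
have G_c : {near 0^'+, G =1 (fun h : R => ((h^-1)%:C * (c h - 1) : Ko))}.
  exists delta => // h /= hb h0.
  have hd : 0 <= h <= delta.
    by move: hb; rewrite sub0r normrN gtr0_norm // => hb; rewrite ltW //= ltW.
  have lam_h : phi h = phi delta / delta * h.
    by rewrite phi_lin // mulrC mulrA mulrAC.
  rewrite /G (polar h hd).2 lam_h sin0 cos0.
  by apply/eqP; rewrite eq_complex /=; apply/andP; split; apply/eqP; ring.
apply: cvg_trans (near_eq_cvg G_c) _.
have Hcos := is_derive0_dilate_right _ _ (phi delta / delta) (is_derive_cos 0).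
have Hsin := is_derive0_dilate_right _ _ (phi delta / delta) (is_derive_sin 0).
rewrite sin0 oppr0 mulr0 in Hcos; rewrite cos0 mulr1 in Hsin.
rewrite (_ : 'i * _ = (0 : R)%:C + 'i * (phi delta / delta)%:C); last by rewrite add0r.
apply: cvgD; first exact: cvg_realC Hcos.
by apply: cvgM; [exact: cvg_cst | exact: cvg_realC Hsin].
Qed.

End UnitarySemigroup.

Theorem mainTheorem3 (R : realType) (X : completeNormedModType R[i])
  (J : X -> X -> R[i]) (x : X) (T : R -> X -> X) (D : set X) (A : X -> X) :
  duality_section J ->
  rnorm x = 1 ->
  (forall y : X, rnorm y = 1 -> y <> x -> rnorm (x + y) < 2) ->
  C0_contraction_semigroup T ->
  is_generator T D A ->
  (fun t : R => complex.Re `|J x (T t x)|) @ +oo --> (1 : R) ->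
  D x /\ exists lambda : R, A x = ('i * lambda%:C) *: x.
Proof.
move=> HJ x1 x_rotund [Tlin [_ [T0 [TD [Tcontr T_cvg]]]]] [Ddef Agen] J_orbit.
have [Jxx J_le] := duality_unit _ _ HJ x1.
have [Jlin Jcont] := (HJ x).1.
have eigen := orbit_eigen (J x) T x Jlin J_le Jxx x1 x_rotund Tlin TD Tcontr J_orbit.
pose c s := J x (T s x).
have cD s t : 0 <= s -> 0 <= t -> c (s + t) = c s * c t.
  move=> s0 t0; rewrite {1}/c TD // (eigen t t0).1 (lin_axiomZ _ (Tlin s s0)).
  by rewrite (lin_axiomZ (J x : X -> R[i]^o)) // mulrC.
have c_cvg : (c : R -> R[i]^o) @ 0^'+ --> (1 : R[i]^o).
  by rewrite -Jxx; apply: continuous_cvg; [exact: Jcont | exact: T_cvg].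
have c0 : c 0 = 1 by rewrite /c T0.
have [lam c'0] := @unitary_right_deriv R c c0 (fun s s0 => (eigen s s0).2) cD c_cvg.
have dq : diff_quot T x @ 0^'+ --> ('i * lam%:C) *: x.
  apply: cvg_trans (cvgZr_tmp c'0); apply: near_eq_cvg; exists 1 => [|h /= _ h0]; first exact: ltr01.
  by rewrite /diff_quot (eigen h (ltW h0)).1 -scalerA scalerBl scale1r.
have Dx : D x by rewrite Ddef; exact: cvgP dq.
by split => //; exists lam; exact: cvg_unique (Agen x Dx) dq.
Qed.
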